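(* Let $p$ be a prime and $t\in\mathbb Z/(p)$ nonzero, and let $j_0,\dots,j_{p-1}\in\mathbb Z/(p)$ (indices read in $\mathbb Z/(p)$) satisfy $j_i=j_{-i}$ and $j_{t^s i}=t^s j_i-(t^s-1)j_0$ for all $i\in\mathbb Z/(p)$, $s\in\mathbb Z$, with $j_i\ne j_k$ for some $i\ne k$. Then the multiplicative order of $t$ in $(\mathbb Z/(p))^\times$ is odd. *)

From HB Require Import structures.
From mathcomp Require Import all_boot all_order all_algebra all_fingroup.
Set Implicit Arguments. Unset Strict Implicit. Unset Printing Implicit Defensive.

From HB Require Import structures.
From mathcomp Require Import all_boot all_order all_algebra all_fingroup.
From mathcomp Require Import cyclic.
Set Implicit Arguments.
Unset Strict Implicit.
Unset Printing Implicit Defensive.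
Import GRing.Theory.
Local Open Scope ring_scope.

(* Suppose the order n of t in (Z/(p))^x is even.  Then
   u = t^(n/2) has order exactly 2, and in a field the only element of
   multiplicative order 2 is -1; in particular -1 <> 1, so 2 is invertible.
   Taking s = n/2 in the equivariance hypothesis gives the point symmetry
   j(-i) = 2 j(0) - j(i), while the symmetry hypothesis says j is even.
   An even function that is also point-symmetric about (0, c) is constant
   (2 j(i) = 2 c), contradicting the existence of i, k with j i <> j k. *)

Lemma order_half_power (gT : finGroupType) (g : gT) :
  ~~ odd #[g]%g -> #[g ^+ #[g]%g./2]%g = 2%N.
Proof.
move=> even_g.
have order_double : #[g]%g = (#[g]%g./2 * 2)%N by rewrite muln2 even_halfK.
have half_gt0 : (0 < #[g]%g./2)%N.
  by have := order_gt0 g; rewrite {1}order_double muln_gt0 => /andP[].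
rewrite orderXdiv; last by rewrite {2}order_double dvdn_mulr.
by rewrite {1}order_double mulKn.
Qed.

Lemma unit_order2_neq1 (R : finUnitRingType) (u : {unit R}) :
  #[u]%g = 2%N -> val u != 1.
Proof.
apply: contra_eqN => /eqP u1.
have -> : u = 1%g by apply: val_inj.
by rewrite order1.
Qed.

(* In a finite integral domain, a unit of multiplicative order 2 is -1:
   its value is a square root of 1 different from 1. *)
Lemma unit_order2_eqN1 (R : finIdomainType) (u : {unit R}) :
  #[u]%g = 2%N -> val u = -1.
Proof.
move=> ord_u.
have u_sqr : val u ^+ 2 = 1 by rewrite -FinRing.val_unitX -ord_u expg_order.
by move/eqP: u_sqr; rewrite sqrf_eq1 (negbTE (unit_order2_neq1 ord_u)) => /eqP.
Qed.

Lemma even_point_symmetric_const (R : idomainType) (f : R -> R) (c : R) :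
  2%:R != 0 :> R ->
  (forall i, f (- i) = f i) ->
  (forall i, f (- i) = 2%:R * c - f i) ->
  forall i, f i = c.
Proof.
move=> two_neq0 f_even f_sym i.
apply: (mulfI two_neq0).
by rewrite mulr_natl mulr2n -{1}f_even f_sym subrK.
Qed.

Theorem mainTheorem11 (p : nat) (Hp : prime p) (t : {unit 'F_p})
  (j : 'F_p -> 'F_p)
  (Hsym : forall i : 'F_p, j i = j (- i))
  (Hact : forall (i : 'F_p) (s : int),
      j ((val t) ^ s * i) = (val t) ^ s * j i - ((val t) ^ s - 1) * j 0)
  (Hnc : exists i k : 'F_p, i != k /\ j i != j k) :
  odd #[t]%g.
Proof.
apply: contraT => even_t.
(* t^(n/2) is the unit of order 2, i.e. -1; hence -1 <> 1 and 2 <> 0. *)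
have half_neg1 : val t ^+ #[t]%g./2 = -1.
  by rewrite -FinRing.val_unitX (unit_order2_eqN1 (order_half_power even_t)).
have two_neq0 : 2%:R != 0 :> 'F_p.
  rewrite mulr2n addr_eq0 eq_sym -half_neg1 -FinRing.val_unitX.
  exact: unit_order2_neq1 (order_half_power even_t).
(* The case s = n/2 of the equivariance is a point symmetry about (0, j 0). *)
have j_sym : forall i, j (- i) = 2%:R * j 0 - j i.
  move=> i; have := Hact i (Posz #[t]%g./2).
  rewrite -exprnP half_neg1 !mulN1r => ->.
  by rewrite -[-1 - 1]opprD mulNr opprK addrC mulr2n.
have j_const := even_point_symmetric_const two_neq0 (fun i => esym (Hsym i)) j_sym.
case: Hnc => i [k [_]].
by rewrite !j_const eqxx.
Qed.
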